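(* Let $\alpha$ be an action of a countable group $\Gamma$ by homeomorphisms on a compact, $0$-dimensional metrizable space $X$ such that the topological full group $[\![\alpha]\!]$ has a dense, locally finite subgroup. Then the clopen type semigroup $T(\alpha)$ is unperforated and cancellative.
   Context: Clopen type semigroup: let $Y = X\times\mathbb N$, and let $\tilde\Gamma=\Gamma\times\mathfrak S$ ($\mathfrak S$ the permutation group of $\mathbb N$) act on $Y$ by $(\gamma,\sigma)(x,n)=(\alpha(\gamma)x,\sigma(n))$. A clopen $A\subseteq Y$ is bounded if $A\cap(X\times\{n\})=\emptyset$ for all large $n$. Bounded clopen $A,B$ are equidecomposable if there are clopen $A_1,\dots,A_n$ and $\tilde\gamma_i\in\tilde\Gamma$ with $A=\bigsqcup_i A_i$, $B=\bigsqcup_i\tilde\gamma_iA_i$. $T(\alpha)$ is the set of classes $[A]$, with $[A]+[B]=[A'\sqcup B']$ for disjoint representatives; $0=[\emptyset]$. $a\le b$ iff $b=a+c$ for some $c$. Unperforated: $na\le nb\Rightarrow a\le b$ for all $n\ge 1$. Cancellative: $a+b=a+c\Rightarrow b=c$. $\mathrm{Homeo}(X)$ has the topology whose basic identity neighbourhoods are the stabilizers $\{g: gA=A\ \forall A\in\mathcal A\}$ of finite clopen partitions $\mathcal A$. $[\![\alpha]\!]$ is the group of homeomorphisms $g$ for which there exist a clopen partition $X=\bigsqcup A_i$ and $\gamma_i\in\Gamma$ with $g=\alpha(\gamma_i)$ on $A_i$; density is for the induced topology. *)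

From HB Require Import structures.
From mathcomp Require Import all_boot all_order all_algebra.
From mathcomp Require Import all_classical all_reals topology Rstruct.

Set Implicit Arguments.
Unset Strict Implicit.
Unset Printing Implicit Defensive.

Import Order.TTheory GRing.Theory Num.Theory.
Local Open Scope classical_set_scope.
Local Open Scope ring_scope.

Definition zero_dim (X : topologicalType) :=
  forall (U : set X) (x : X), open U -> U x ->
    exists V : set X, [/\ clopen V, V x & V `<=` U].

Definition metrizable (X : topologicalType) :=
  exists d : X -> X -> Rdefinitions.R,
    [/\ (forall x y, d x y = 0 <-> x = y),
        (forall x y, d x y = d y x),
        (forall x y z, d x z <= d x y + d y z) &
        (forall U : set X, open U <->
           (forall x, U x -> exists e : Rdefinitions.R,
                0 < e /\ [set y | d x y < e] `<=` U))].

Definition is_action (G : groupType) (X : topologicalType) (alpha : G -> X -> X) :=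
  [/\ alpha 1%g = id,
      (forall g h : G, alpha (g * h)%g = alpha g \o alpha h) &
      (forall g, continuous (alpha g))].

Definition homeo (X : topologicalType) (f : X -> X) :=
  continuous f /\ exists g : X -> X, [/\ continuous g, cancel f g & cancel g f].

(* a finite clopen partition of X indexed by 'I_n (empty pieces allowed) *)
Definition clopen_partition (X : topologicalType) (n : nat) (P : 'I_n -> set X) :=
  [/\ (forall i, clopen (P i)),
      trivIset [set: 'I_n] P &
      (forall x, exists i, P i x)].

Definition full_group (G : groupType) (X : topologicalType) (alpha : G -> X -> X)
    (f : X -> X) :=
  homeo f /\
  exists (n : nat) (P : 'I_n -> set X) (gam : 'I_n -> G),
    clopen_partition P /\ (forall i x, P i x -> f x = alpha (gam i) x).

Definition fun_subgroup (X : topologicalType) (S : set (X -> X)) :=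
  [/\ S id,
      (forall f g, S f -> S g -> S (f \o g)) &
      (forall f, S f -> exists g, [/\ S g, f \o g = id & g \o f = id])].

Definition generated (X : topologicalType) (F : set (X -> X)) : set (X -> X) :=
  [set f | forall S, fun_subgroup S -> F `<=` S -> S f].

Definition locally_finite (X : topologicalType) (H : set (X -> X)) :=
  forall F, F `<=` H -> finite_set F -> finite_set (generated F).

(* H is dense in [[alpha]] for the topology induced from Homeo(X), whose
   basic neighbourhoods of g are g * Stab(P), P a finite clopen partition;
   h lies in g * Stab(P) iff h(A) = g(A) for all pieces A of P. *)
Definition dense_in_full (G : groupType) (X : topologicalType)
    (alpha : G -> X -> X) (H : set (X -> X)) :=
  forall g, full_group alpha g ->
  forall (n : nat) (P : 'I_n -> set X), clopen_partition P ->
    exists h, H h /\ forall i, h @` P i = g @` P i.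

(* Y = X * nat, with nat discrete: A is clopen in Y iff every slice is clopen *)
Definition clopenY (X : topologicalType) (A : set (X * nat)) :=
  forall n : nat, clopen [set x | A (x, n)].

Definition boundedY (X : topologicalType) (A : set (X * nat)) :=
  exists N : nat, forall x n, (N <= n)%N -> ~ A (x, n).

Definition bclopen (X : topologicalType) (A : set (X * nat)) :=
  clopenY A /\ boundedY A.

(* action of Gamma x Sym(N) on Y *)
Definition actY (G : groupType) (X : topologicalType) (alpha : G -> X -> X)
    (g : G) (s : nat -> nat) (p : X * nat) : X * nat :=
  (alpha g p.1, s p.2).

Definition equidec (G : groupType) (X : topologicalType) (alpha : G -> X -> X)
    (A B : set (X * nat)) :=
  exists (k : nat) (P : 'I_k -> set (X * nat)) (gam : 'I_k -> G)
         (sig : 'I_k -> nat -> nat),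
    [/\ (forall i, bijective (sig i) /\ clopenY (P i)),
        trivIset [set: 'I_k] P,
        A = (\bigcup_(i in [set: 'I_k]) P i),
        trivIset [set: 'I_k] (fun i => actY alpha (gam i) (sig i) @` P i) &
        B = (\bigcup_(i in [set: 'I_k]) (actY alpha (gam i) (sig i) @` P i))].

(* [S] = [A] + [C] in T(alpha): S is equidecomposable to a disjoint union
   of representatives of [A] and [C] *)
Definition sum_rep (G : groupType) (X : topologicalType) (alpha : G -> X -> X)
    (A C S : set (X * nat)) :=
  exists A' C', [/\ bclopen A' /\ bclopen C', A' `&` C' = set0,
                    equidec alpha A A', equidec alpha C C' &
                    equidec alpha S (A' `|` C')].

(* [A] <= [B] in T(alpha): [B] = [A] + c for some c *)
Definition leT (G : groupType) (X : topologicalType) (alpha : G -> X -> X)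
    (A B : set (X * nat)) :=
  exists C, bclopen C /\ sum_rep alpha A C B.

(* [M] = n [A] in T(alpha): M is equidecomposable to a disjoint union of
   n representatives of [A] *)
Definition nmul (G : groupType) (X : topologicalType) (alpha : G -> X -> X)
    (n : nat) (A M : set (X * nat)) :=
  exists P : 'I_n -> set (X * nat),
    [/\ (forall i, bclopen (P i) /\ equidec alpha (P i) A),
        trivIset [set: 'I_n] P &
        equidec alpha M (\bigcup_(i in [set: 'I_n]) P i)].

Definition unperforated (G : groupType) (X : topologicalType) (alpha : G -> X -> X) :=
  forall (n : nat) (A B M N : set (X * nat)), (0 < n)%N ->
    bclopen A -> bclopen B -> bclopen M -> bclopen N ->
    nmul alpha n A M -> nmul alpha n B N -> leT alpha M N -> leT alpha A B.

Definition cancellative (G : groupType) (X : topologicalType) (alpha : G -> X -> X) :=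
  forall A B C S : set (X * nat),
    bclopen A -> bclopen B -> bclopen C -> bclopen S ->
    sum_rep alpha A B S -> sum_rep alpha A C S -> equidec alpha B C.

(* Fix a finite group K of elements of the topological full group and count, for
   a bounded clopen A of X * nat and a point y, the points of A lying over the
   K-orbit of y.  This count is additive and invariant under moving a clopen piece
   by an element of K.  By density every piece of a given equidecomposition can be
   moved by an element of H, and by local finiteness finitely many such elements
   lie in a common finite subgroup K of H; so equidecomposable sets have equal
   K-counts.  Conversely, if the K-count of A is pointwise at most that of B, then
   near each point x a matching of the points of A over the orbit of x with points
   of B over it moves A into B; zero-dimensionality and compactness glue these
   local moves along finitely many disjoint K-invariant clopen sets, which
   equidecomposes A onto a clopen subset of B, all of B when the counts agree.
   Unperforation then follows from n c(A) <= n c(B) -> c(A) <= c(B), and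
   cancellation from c(A) + c(B) = c(A) + c(C) -> c(B) = c(C). *)

From HB Require Import structures.
From mathcomp Require Import all_boot all_order all_algebra.
From mathcomp Require Import all_classical all_reals topology Rstruct.
From mathcomp Require Import lra.

Set Implicit Arguments.
Unset Strict Implicit.
Unset Printing Implicit Defensive.
Local Open Scope classical_set_scope.

Section ClopenSets.
Variable X : topologicalType.

Lemma clopen_bigcup (I : choiceType) (D : set I) (V : I -> set X) :
  finite_set D -> (forall i, D i -> clopen (V i)) -> clopen (\bigcup_(i in D) V i).
Proof.
move=> Dfin cV; split; first by apply: bigcup_open => i /cV[].
by apply: closed_bigcup => // i /cV[].
Qed.

Lemma clopen_bigcap (I : finType) (V : I -> set X) :
  (forall i, clopen (V i)) -> clopen (\bigcap_i V i).
Proof.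
move=> cV; rewrite -[X in clopen X]setCK setC_bigcap.
apply: (@clopenC _ _ set0); apply: clopen_bigcup => [|i _]; first exact: finite_finset.
exact: (@clopenC _ _ set0).
Qed.

Lemma clopen_pattern (J : finType) (V : J -> set X) (b : J -> Prop) :
  (forall i, clopen (V i)) -> clopen [set y | forall i, V i y <-> b i].
Proof.
move=> cV; have -> : [set y | forall i, V i y <-> b i] =
    \bigcap_i (if pselect (b i) then V i else ~` V i).
  apply/seteqP; split => y hy i.
    by case: pselect (hy i) => bi [h1 h2] _; [exact: h2|move=> /h1].
  by case: pselect (hy i I) => bi Vy; split => // h.
by apply: clopen_bigcap => i; case: pselect => bi; [|apply: (@clopenC _ _ set0)]; exact: cV.
Qed.

Lemma homeo_image_clopen (f : X -> X) (V : set X) : homeo f -> clopen V -> clopen (f @` V).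
Proof.
move=> [_ [g [gc fK gK]]] cV; have -> : f @` V = g @^-1` V.
  apply/seteqP; split => [_ [v Vv <-]|x /= Vgx]; first by rewrite /= fK.
  by exists (g x) => //; rewrite gK.
exact: preimage_clopen.
Qed.

Lemma clopen_separation : zero_dim X -> (forall x : X, closed [set x]) ->
  forall x y : X, x <> y -> exists U, [/\ clopen U, U x & ~ U y].
Proof.
move=> zd T1 x y xy; have [|//|V [cV Vx Vy]] := zd (~` [set y]) x; first by rewrite openC.
by exists V; split => // /Vy; apply.
Qed.

End ClopenSets.

Lemma metrizable_closed1 (X : topologicalType) : metrizable X -> forall x : X, closed [set x].
Proof.
move=> [d [d0 dsym dtri dopen]] x; rewrite -openC; apply/dopen => y yx.
have dyx_neq0 : d y x <> 0%R by move=> /d0 e; apply: yx; rewrite e.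
have dyx_ge0 : (0 <= d y x)%R.
  by have := dtri y x y; rewrite (dsym x y) (proj2 (d0 y y) erefl); lra.
exists (d y x); split.
  by rewrite Order.POrderTheory.lt_neqAle eq_sym dyx_ge0 andbT; apply/eqP.
by move=> z /= dz zx; rewrite zx Order.POrderTheory.ltxx in dz.
Qed.

(* [compact_cover] is stated for pointed spaces, hence the pointed copy of X. *)
Section CompactCover.
Variables (X : topologicalType) (x0 : X).

Let Xp : Type := X.
HB.instance Definition _ := Topological.copy Xp X.
HB.instance Definition _ := isPointed.Build Xp x0.

Lemma compact_cover_seq (f : X -> set X) : compact [set: X] ->
  (forall x, open (f x)) -> (forall x, f x x) ->
  exists s : seq X, forall y, exists2 x, x \in s & f x y.
Proof.
move=> cX fo fx; have : @compact Xp setT := cX; rewrite compact_cover.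
move=> /(_ Xp setT f (fun x _ => fo x) (fun y _ => ex_intro2 _ _ y I (fx y))) [D _ cov].
by exists (finmap.enum_fset D) => y; have [x xD fy] := cov y I; exists x.
Qed.

End CompactCover.

Lemma compact_finite_subcover (X : topologicalType) (f : X -> set X) :
  compact [set: X] -> (forall x, open (f x)) -> (forall x, f x x) ->
  exists (L : nat) (p : 'I_L -> X), forall y, exists j, f (p j) y.
Proof.
move=> cX fo fx; have [s cov] : exists s : seq X, forall y, exists2 x, x \in s & f x y.
  have [[x0 _]|nX] := pselect (exists x : X, True); first exact: compact_cover_seq.
  by exists [::] => y; case: nX; exists y.
exists (size s), (tnth (in_tuple s)) => y; have [x xs fy] := cov y.
have xs' : (index x s < size s)%N by rewrite index_mem.
by exists (Ordinal xs'); rewrite (tnth_nth x) nth_index.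
Qed.

(** * Equidecomposition *)

Definition catf T k1 k2 (f1 : 'I_k1 -> T) (f2 : 'I_k2 -> T) (i : 'I_(k1 + k2)) : T :=
  match fintype.split i with inl j => f1 j | inr j => f2 j end.

Section Concatenation.
Variables (k1 k2 : nat).

Lemma catf_l T (f1 : 'I_k1 -> T) (f2 : 'I_k2 -> T) j : catf f1 f2 (lshift k2 j) = f1 j.
Proof. by rewrite /catf (unsplitK (inl _ j)). Qed.

Lemma catf_r T (f1 : 'I_k1 -> T) (f2 : 'I_k2 -> T) j : catf f1 f2 (rshift k1 j) = f2 j.
Proof. by rewrite /catf (unsplitK (inr _ j)). Qed.

Lemma lshift_or_rshift (i : 'I_(k1 + k2)) :
  (exists j, i = lshift k2 j) \/ (exists j, i = rshift k1 j).
Proof. by rewrite -(splitK i); case: (fintype.split i) => j; [left|right]; exists j. Qed.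

Lemma bigcup_catf U (F1 : 'I_k1 -> set U) (F2 : 'I_k2 -> set U) :
  \bigcup_i catf F1 F2 i = \bigcup_i F1 i `|` \bigcup_i F2 i.
Proof.
apply/seteqP; split => [u [i _]|u [[i _ Fu]|[i _ Fu]]].
- by case: (lshift_or_rshift i) => -[j ->]; rewrite ?catf_l ?catf_r => Fu; [left|right]; exists j.
- by exists (lshift k2 i) => //; rewrite catf_l.
- by exists (rshift k1 i) => //; rewrite catf_r.
Qed.

Lemma trivIset_catf U (F1 : 'I_k1 -> set U) (F2 : 'I_k2 -> set U) :
  trivIset setT F1 -> trivIset setT F2 -> \bigcup_i F1 i `&` \bigcup_i F2 i = set0 ->
  trivIset setT (catf F1 F2).
Proof.
move=> t1 t2 F12 i j _ _; have F12' i' j' u : F1 i' u -> F2 j' u -> False.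
  by move=> F1u F2u; rewrite -[False]/(set0 u) -F12; split; [exists i'|exists j'].
case: (lshift_or_rshift i) => -[i' ->]; case: (lshift_or_rshift j) => -[j' ->];
  rewrite ?catf_l ?catf_r => -[u [Fi Fj]].
- by congr lshift; apply: t1 => //; exists u.
- by case: (F12' _ _ _ Fi Fj).
- by case: (F12' _ _ _ Fj Fi).
- by congr rshift; apply: t2 => //; exists u.
Qed.

End Concatenation.

Definition moveY T (f : T -> T) (s : nat -> nat) (p : T * nat) : T * nat := (f p.1, s p.2).

Section Equidecomposition.
Variables (G : groupType) (X : topologicalType) (alpha : G -> X -> X).
Hypothesis act : is_action alpha.

Lemma action_homeo g : homeo (alpha g).
Proof.
case: act => a1 aM ac; split => //; exists (alpha g^-1)%g; split => // x.
  by rewrite -[alpha _ (alpha _ x)]/((alpha _ \o alpha _) x) -aM mulVg a1.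
by rewrite -[alpha _ (alpha _ x)]/((alpha _ \o alpha _) x) -aM mulgV a1.
Qed.

Lemma action_full g : full_group alpha (alpha g).
Proof.
split; first exact: action_homeo.
exists 1%N, (fun=> setT), (fun=> g); split => //; split => [_|i j _ _ _|x].
- exact: clopenT.
- by rewrite !ord1.
- by exists ord0.
Qed.

Lemma full_group_id : full_group alpha id.
Proof. by case: act => a1 _ _; rewrite -a1; exact: action_full. Qed.

Lemma equidec_move (P : set (X * nat)) f s :
  clopenY P -> full_group alpha f -> bijective s -> equidec alpha P (moveY f s @` P).
Proof.
move=> cP [[_ [f' [_ fK _]]] [n [Q [gam [[cQ tQ covQ] fQ]]]]] bs.
exists n, (fun i => P `&` fst @^-1` Q i), gam, (fun=> s); split.
- move=> i; split => // k.
  by rewrite -[X in clopen X]/([set x | P (x, k)] `&` Q i); exact: clopenI.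
- by move=> i j _ _ [[x k] [[_ Qi] [_ Qj]]]; apply: tQ => //; exists x.
- apply/seteqP; split => [[x k] Pxk|p [i _ []//]].
  by case: (covQ x) => i Qi; exists i.
- move=> i j _ _ [_ [[[x1 k1] [_ Q1] <-] [[x2 k2] [_ Q2] e]]].
  apply: tQ => //; exists x1; split => //; move: e.
  rewrite /actY /= -(fQ _ _ Q1) -(fQ _ _ Q2) => -[e _].
  by rewrite -(can_inj fK e).
- apply/seteqP; split => [_ [[x k] Pxk <-]|_ [i _ [[x k] [Pxk Qx] <-]]].
    case: (covQ x) => i Qi; exists i => //; exists (x, k) => //.
    by rewrite /actY /moveY /= (fQ _ _ Qi).
  by exists (x, k) => //; rewrite /actY /moveY /= (fQ _ _ Qx).
Qed.

Lemma equidec_refl (P : set (X * nat)) : clopenY P -> equidec alpha P P.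
Proof.
move=> cP; have bid : bijective (@id nat) by exists id.
have := equidec_move cP full_group_id bid.
have -> // : moveY id id @` P = P.
by apply/seteqP; split => [_ [[x k] Pxk <-]//|p Pp]; exists p => //; case: p Pp.
Qed.

Lemma equidec_set0 : equidec alpha set0 set0.
Proof.
exists 0%N, (fun=> set0), (fun=> 1%g), (fun=> id).
by split; try by [case|apply/seteqP; split => // p [[]]].
Qed.

Lemma equidec_setU (A B C D : set (X * nat)) :
  equidec alpha A B -> equidec alpha C D -> A `&` C = set0 -> B `&` D = set0 ->
  equidec alpha (A `|` C) (B `|` D).
Proof.
move=> [k1 [P1 [g1 [s1 [h1 t1 eA t1' eB]]]]] [k2 [P2 [g2 [s2 [h2 t2 eC t2' eD]]]]] AC BD.
pose Q1 i := actY alpha (g1 i) (s1 i) @` P1 i; pose Q2 i := actY alpha (g2 i) (s2 i) @` P2 i.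
have catQ : (fun i => actY alpha (catf g1 g2 i) (catf s1 s2 i) @` catf P1 P2 i) = catf Q1 Q2.
  by apply/funext => i; case: (lshift_or_rshift i) => -[j ->]; rewrite ?catf_l ?catf_r.
exists (k1 + k2)%N, (catf P1 P2), (catf g1 g2), (catf s1 s2); rewrite catQ; split.
- by move=> i; case: (lshift_or_rshift i) => -[j ->]; rewrite ?catf_l ?catf_r.
- by apply: trivIset_catf; rewrite -?eA -?eC.
- by rewrite bigcup_catf eA eC.
- by apply: trivIset_catf; rewrite -?eB -?eD.
- by rewrite bigcup_catf eB eD.
Qed.

Lemma equidec_bigcup (I : eqType) (D : set I) (P Q : I -> set (X * nat)) :
  finite_set D -> (forall i, D i -> equidec alpha (P i) (Q i)) ->
  trivIset D P -> trivIset D Q ->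
  equidec alpha (\bigcup_(i in D) P i) (\bigcup_(i in D) Q i).
Proof.
move=> /finite_seqP[s ->]; elim: s => [|a s IH] ePQ tP tQ.
  by rewrite set_nil !bigcup_set0; exact: equidec_set0.
have sub : [set` s] `<=` [set` a :: s] by move=> i si; rewrite /= inE si orbT.
have [as_|nas] := boolP (a \in s).
  have E : [set` a :: s] = [set` s].
    by apply/seteqP; split => // i; rewrite /= inE => /orP[/eqP->|].
  by rewrite E in ePQ tP tQ *; exact: IH.
have -> : [set` a :: s] = a |` [set` s].
  apply/seteqP; split => i; rewrite /= inE; first by case/orP => [/eqP|]; [left|right].
  by case=> [->|->]; rewrite ?eqxx ?orbT.
have disj F : trivIset [set` a :: s] F -> \bigcup_(i in [set` s]) F i `&` F a = set0.
  move=> tF; apply/seteqP; split => // p [[i si Fi] Fa].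
  have ia : i = a by apply: tF; [exact: sub|rewrite /= inE eqxx|exists p].
  by move: nas; rewrite -ia si.
rewrite !bigcup_setU1 ![_ `|` \bigcup_(i in _) _]setUC; apply: equidec_setU.
- apply: IH => [i si||]; first by apply: ePQ; exact: sub.
  + exact: sub_trivIset sub tP.
  + exact: sub_trivIset sub tQ.
- by apply: ePQ; rewrite /= inE eqxx.
- exact: disj.
- exact: disj.
Qed.

End Equidecomposition.

Definition bounded_by T N (A : set (T * nat)) := forall p, A p -> (p.2 < N)%N.

Lemma bounded_by_le T N N' (A : set (T * nat)) : (N <= N')%N -> bounded_by N A -> bounded_by N' A.
Proof. by move=> NN' bA p /bA /leq_trans; apply. Qed.

Lemma clopenY_bigcup (X : topologicalType) (I : choiceType) (D : set I)
    (P : I -> set (X * nat)) :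
  finite_set D -> (forall i, D i -> clopenY (P i)) -> clopenY (\bigcup_(i in D) P i).
Proof. by move=> Dfin cP n; exact: (clopen_bigcup Dfin (fun i Di => cP i Di n)). Qed.

Lemma boundedY_bounded (X : topologicalType) (A : set (X * nat)) :
  boundedY A -> exists N, bounded_by N A.
Proof.
by move=> [N hN]; exists N => -[x n] Axn; rewrite ltnNge; apply/negP => /(hN x); apply.
Qed.

Lemma bclopen_setU (X : topologicalType) (A B : set (X * nat)) :
  bclopen A -> bclopen B -> bclopen (A `|` B).
Proof.
move=> [cA [NA hA]] [cB [NB hB]]; split; first by move=> n; exact: clopenU (cA n) (cB n).
by exists (maxn NA NB) => x n; rewrite geq_max => /andP[/(hA x) nA /(hB x) nB] [].
Qed.

Lemma bclopen_bigcup (X : topologicalType) k (P : 'I_k -> set (X * nat)) :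
  (forall i, bclopen (P i)) -> bclopen (\bigcup_i P i).
Proof.
move=> bcP; split; first by apply: clopenY_bigcup => [|i _]; [exact: finite_finset|case: (bcP i)].
have /choice[NP hNP] : forall i, exists N, bounded_by N (P i).
  by move=> i; apply: boundedY_bounded; case: (bcP i).
exists (\max_(i < k) NP i)%N => x n le [i _ Pin].
by have := hNP i _ Pin; rewrite ltnNge (leq_trans (leq_bigmax i) le).
Qed.

Section LevelAtoms.
Variable X : topologicalType.

Definition level_constant n (Q : 'I_n -> set X) (P : set (X * nat)) :=
  forall j y y' k, Q j y -> Q j y' -> P (y, k) -> P (y', k).

Lemma level_atoms (P : set (X * nat)) N : clopenY P -> bounded_by N P ->
  exists n (Q : 'I_n -> set X), clopen_partition Q /\ level_constant Q P.
Proof.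
move=> cP bP.
pose atom (f : {ffun 'I_N -> bool}) := [set y | forall l : 'I_N, P (y, val l) <-> f l].
have atom_of y : atom [ffun l : 'I_N => `[< P (y, val l) >]] y.
  by move=> l; rewrite ffunE; split => /asboolP.
exists #|{ffun 'I_N -> bool}|, (fun j => atom (enum_val j)); split; first split.
- by move=> j; apply: clopen_pattern => l; exact: cP.
- move=> i j _ _ [y [Qi Qj]]; apply: enum_val_inj; apply/ffunP => l.
  by apply/idP/idP => [/(Qi l)/(Qj l)|/(Qj l)/(Qi l)].
- by move=> y; exists (enum_rank [ffun l : 'I_N => `[< P (y, val l) >]]); rewrite enum_rankK.
- move=> j y y' k Qy Qy' Pyk; have ltk := bP _ Pyk.
  by apply/(Qy' (Ordinal ltk)); apply/(Qy (Ordinal ltk)).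
Qed.

Lemma move_image_atoms (P : set (X * nat)) n (Q : 'I_n -> set X) (f1 f2 : X -> X) s :
  (forall y, exists j, Q j y) -> level_constant Q P ->
  (forall j, f1 @` Q j = f2 @` Q j) -> moveY f1 s @` P = moveY f2 s @` P.
Proof.
move=> covQ QP.
suff sub g1 g2 : (forall j, g1 @` Q j `<=` g2 @` Q j) -> moveY g1 s @` P `<=` moveY g2 s @` P.
  by move=> fQ; apply/seteqP; split; apply: sub => j; rewrite fQ.
move=> gQ _ [[y k] Pyk <-]; have [j Qy] := covQ y.
have [y' Qy' e] := gQ j _ (ex_intro2 _ _ y Qy erefl).
by exists (y', k); [exact: QP Qy Qy' Pyk|rewrite /moveY /= e].
Qed.

End LevelAtoms.

(** * Counting points over orbits of a finite group of maps *)

Definition map_group T m (kk : 'I_m -> T -> T) :=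
  [/\ forall i j, exists l, kk l = kk i \o kk j,
      forall i, exists j, cancel (kk i) (kk j) /\ cancel (kk j) (kk i) &
      exists i, kk i = id].

Section MapGroup.
Variables (T : Type) (m : nat) (kk : 'I_m -> T -> T).
Hypothesis Kgrp : map_group kk.

Let Kmul := let: And3 h _ _ := Kgrp in h.
Let Kinv := let: And3 _ h _ := Kgrp in h.
Let Kone := let: And3 _ _ h := Kgrp in h.

Definition kmul i j := projT1 (cid (Kmul i j)).
Definition kinv i := projT1 (cid (Kinv i)).
Definition kone := projT1 (cid Kone).

Lemma kmulE i j y : kk (kmul i j) y = kk i (kk j y).
Proof. by rewrite /kmul; case: cid => l /= ->. Qed.

Lemma kinvK i : cancel (kk i) (kk (kinv i)).
Proof. by rewrite /kinv; case: cid => j [] /=. Qed.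

Lemma kinvKV i : cancel (kk (kinv i)) (kk i).
Proof. by rewrite /kinv; case: cid => j [] /=. Qed.

Lemma koneE y : kk kone y = y.
Proof. by rewrite /kone; case: cid => i /= ->. Qed.

End MapGroup.

Lemma card_bigcup_disjoint (T : finType) k (F : 'I_k -> {set T}) :
  (forall i j t, t \in F i -> t \in F j -> i = j) ->
  #|(\bigcup_(i < k) F i)%SET| = (\sum_(i < k) #|F i|)%N.
Proof.
elim: k F => [|k IH] F Fdisj; first by rewrite !big_ord0 cards0.
rewrite !big_ord_recr /= cardsU IH; last first.
  by move=> i j t Fi Fj; apply/val_inj; have /(congr1 val) := Fdisj _ _ _ Fi Fj.
suff -> : ((\bigcup_(i < k) F (widen_ord (leqnSn k) i)) :&: F ord_max = finset.set0)%SET.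
  by rewrite cards0 subn0.
apply/setP => t; rewrite finset.in_setI finset.in_set0; apply/negP => /andP[/bigcupP[i _ Fi] Fm].
by have /(congr1 val) /= ei := Fdisj _ _ _ Fi Fm; move: (ltn_ord i); rewrite ei ltnn.
Qed.

Section OrbitCount.
Variables (T : Type) (m : nat) (kk : 'I_m -> T -> T).

(* A point kk i y of the orbit of y is represented by the least index i giving it. *)
Definition orbit_rep y (i : 'I_m) := forall j : 'I_m, (j < i)%N -> kk j y <> kk i y.

Definition orbit_points N (A : set (T * nat)) y : {set 'I_m * 'I_N} :=
  [set p | `[< A (kk p.1 y, val p.2) /\ orbit_rep y p.1 >]].

Definition orbit_countN N A y := #|orbit_points N A y|.

Lemma orbit_pointsP N A y p :
  p \in orbit_points N A y <-> A (kk p.1 y, val p.2) /\ orbit_rep y p.1.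
Proof. by rewrite inE; split => /asboolP. Qed.

Definition rep_of y i := [arg min_(j < i | `[< kk j y = kk i y >]) val j].

Lemma rep_ofP y i : kk (rep_of y i) y = kk i y /\ orbit_rep y (rep_of y i).
Proof.
rewrite /rep_of; case: arg_minnP => [|j /asboolP ej jmin]; first exact/asboolP.
split => // l ltl el; have := jmin l; rewrite el ej => /(_ (asboolT erefl)).
by rewrite leqNgt ltl.
Qed.

Lemma rep_ofE y i : kk (rep_of y i) y = kk i y. Proof. by case: (rep_ofP y i). Qed.

Lemma rep_of_rep y i : orbit_rep y (rep_of y i). Proof. by case: (rep_ofP y i). Qed.

Lemma orbit_rep_uniq y i j : orbit_rep y i -> orbit_rep y j -> kk i y = kk j y -> i = j.
Proof.
move=> ri rj e; apply: val_inj; case: (ltngtP i j) => // lt; first by case: (rj _ lt).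
by case: (ri _ lt).
Qed.

Lemma orbit_countN_setU N A B y : A `&` B = set0 ->
  orbit_countN N (A `|` B) y = (orbit_countN N A y + orbit_countN N B y)%N.
Proof.
move=> AB; rewrite /orbit_countN -cardsUI.
have -> : orbit_points N (A `|` B) y = (orbit_points N A y :|: orbit_points N B y)%SET.
  apply/setP => p; rewrite finset.in_setU; apply/idP/orP.
    by move=> /orbit_pointsP[[Ap|Bp] rp]; [left|right]; apply/orbit_pointsP.
  by case=> /orbit_pointsP[Zp rp]; apply/orbit_pointsP; split => //; [left|right].
suff -> : (orbit_points N A y :&: orbit_points N B y = finset.set0)%SET.
  by rewrite cards0 addn0.
apply/setP => p; rewrite finset.in_setI finset.in_set0.
apply/negP => /andP[/orbit_pointsP[Ap _] /orbit_pointsP[Bp _]].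
by rewrite -[False]/(set0 (kk p.1 y, val p.2)) -AB.
Qed.

Lemma orbit_countN_bigcup N k (P : 'I_k -> set (T * nat)) y : trivIset setT P ->
  orbit_countN N (\bigcup_i P i) y = (\sum_(i < k) orbit_countN N (P i) y)%N.
Proof.
move=> tP; rewrite /orbit_countN -card_bigcup_disjoint; last first.
  move=> i j p /orbit_pointsP[Pi _] /orbit_pointsP[Pj _].
  by apply: tP => //; exists (kk p.1 y, val p.2).
apply: eq_card => p; apply/idP/bigcupP.
  by move=> /orbit_pointsP[[i _ Pi] rp]; exists i => //; apply/orbit_pointsP.
by case=> i _ /orbit_pointsP[Pi rp]; apply/orbit_pointsP; split => //; exists i.
Qed.

Lemma orbit_countN_widen N N' A y : bounded_by N A -> (N <= N')%N ->
  orbit_countN N' A y = orbit_countN N A y.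
Proof.
move=> bA NN'; pose w (p : 'I_m * 'I_N) := (p.1, widen_ord NN' p.2).
have w_inj : injective w by move=> [i n] [j l] [-> /val_inj ->].
rewrite /orbit_countN -(card_imset _ w_inj); apply: eq_card => -[i n'].
apply/idP/imsetP => [/orbit_pointsP[An' ri]|[[j n] /orbit_pointsP[An rj] [-> ->]]].
  have ltn := bA _ An'; exists (i, Ordinal ltn); first exact/orbit_pointsP.
  by congr pair; apply: val_inj.
exact/orbit_pointsP.
Qed.

(* [level_bound A] bounds the levels of A when A is bounded (it is junk otherwise),
   so that [orbit_count] needs no explicit bound; see [orbit_countE]. *)
Definition level_bound (A : set (T * nat)) := xget 0%N [set N | bounded_by N A].

Definition orbit_count A y := orbit_countN (level_bound A) A y.

Lemma orbit_countE N A y : bounded_by N A -> orbit_count A y = orbit_countN N A y.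
Proof.
move=> bA; have bA' : bounded_by (level_bound A) A.
  exact: (@xgetPex _ 0%N [set N | bounded_by N A] (ex_intro _ N bA)).
rewrite /orbit_count -(orbit_countN_widen y bA' (leq_maxr N _)).
by rewrite (orbit_countN_widen y bA (leq_maxl _ _)).
Qed.

Lemma orbit_count_setU A B y : (exists N, bounded_by N A) -> (exists N, bounded_by N B) ->
  A `&` B = set0 -> orbit_count (A `|` B) y = (orbit_count A y + orbit_count B y)%N.
Proof.
move=> [NA bA] [NB bB] AB; have bA' := bounded_by_le (leq_maxl NA NB) bA.
have bB' := bounded_by_le (leq_maxr NA NB) bB.
have bAB : bounded_by (maxn NA NB) (A `|` B) by move=> p [/bA'|/bB'].
by rewrite !(orbit_countE y bA') (orbit_countE y bB') (orbit_countE y bAB) orbit_countN_setU.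
Qed.

Lemma orbit_count_bigcup k (P : 'I_k -> set (T * nat)) y :
  (forall i, exists N, bounded_by N (P i)) -> trivIset setT P ->
  orbit_count (\bigcup_i P i) y = (\sum_(i < k) orbit_count (P i) y)%N.
Proof.
move=> /choice[NP bP] tP; pose N := (\max_(i < k) NP i)%N.
have bPN i : bounded_by N (P i) := bounded_by_le (leq_bigmax i) (bP i).
have bUN : bounded_by N (\bigcup_i P i) by move=> p [i _ /bPN].
rewrite (orbit_countE y bUN) orbit_countN_bigcup //.
by apply: eq_bigr => i _; rewrite (orbit_countE y (bPN i)).
Qed.

Hypothesis Kgrp : map_group kk.

Lemma orbit_countN_move N P h s y : bijective s -> bounded_by N P ->
  bounded_by N (moveY (kk h) s @` P) ->
  orbit_countN N (moveY (kk h) s @` P) y = orbit_countN N P y.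
Proof.
move=> bs bP bQ; have s_inj : injective s := bij_inj bs.
pose phi (p : 'I_m * 'I_N) := (rep_of y (kmul Kgrp h p.1), insubd p.2 (s p.2)).
have phi2 p : p \in orbit_points N P y -> val (phi p).2 = s p.2.
  move=> /orbit_pointsP[Pp _]; rewrite val_insubd.
  by rewrite (bQ (kk h (kk p.1 y), s p.2)) //; exists (kk p.1 y, val p.2).
rewrite /orbit_countN -[RHS](card_in_imset (f := phi)); last first.
  move=> [i n] [j l] /[dup] pP /orbit_pointsP[_ ri] /[dup] qP /orbit_pointsP[_ rj] [e1 e2].
  have {}e2 : s n = s l by rewrite -(phi2 _ pP) -(phi2 _ qP) /phi /= e2.
  congr pair; last exact/val_inj/s_inj.
  apply: orbit_rep_uniq ri rj _; apply: (can_inj (kinvK Kgrp h)); rewrite /=.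
  by rewrite -!(kmulE Kgrp) -(rep_ofE y (kmul Kgrp h i)) e1 rep_ofE.
apply: eq_card => -[i n]; apply/idP/imsetP => [/orbit_pointsP /= [[[z k] Pzk [ez ek]] ri]|].
- have ltk : (k < N)%N := bP _ Pzk.
  pose j := rep_of y (kmul Kgrp (kinv Kgrp h) i).
  have ej : kk j y = z by rewrite rep_ofE kmulE -ez kinvK.
  have jP : (j, Ordinal ltk) \in orbit_points N P y.
    by apply/orbit_pointsP; rewrite ej; split => //; exact: rep_of_rep.
  exists (j, Ordinal ltk) => //; congr pair.
  + rewrite /phi /=; apply: (orbit_rep_uniq ri (rep_of_rep (y := y) (i := kmul Kgrp h j))).
    by rewrite rep_ofE kmulE ej.
  + by apply: val_inj; rewrite (phi2 _ jP).
- move=> [[j l] /[dup] jP /orbit_pointsP[Pjl _] [-> ->]]; apply/orbit_pointsP.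
  split; last exact: rep_of_rep.
  by rewrite (phi2 _ jP) /= rep_ofE kmulE; exists (kk j y, val l).
Qed.

End OrbitCount.

(** * Sufficiently large finite subgroups of H *)

(* Finite subgroups of X -> X are handled through enumerations 'I_m -> X -> X. *)
Definition finmaps T := {m : nat & 'I_m -> T -> T}.

Section LargeSubgroups.
Variables (X : topologicalType) (H : set (X -> X)).

Definition subgroup_in (K : finmaps X) := map_group (tagged K) /\ forall i, H (tagged K i).

(* Statements holding for all large enough finite subgroups of H form a filter;
   local finiteness makes it proper, so finitely many of them hold simultaneously. *)
Definition large_subgroups : set_system (finmaps X) :=
  [set Q | exists F, [/\ finite_set F, F `<=` H &
     forall K, subgroup_in K -> F `<=` range (tagged K) -> Q K]].

Hypotheses (Hsub : fun_subgroup H) (Hlf : locally_finite H).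

Lemma generated_subgroup (F : set (X -> X)) : F `<=` H -> fun_subgroup (generated F).
Proof.
move=> FH; split => [S []//|f g fF gF S sS FS|f fF].
- by case: (sS) => _ hc _; apply: hc; [exact: fF|exact: gF].
have [_ _ /(_ f (fF H Hsub FH))[g [_ fg gf]]] := Hsub.
exists g; split => // S sS FS; have [_ _ /(_ f (fF S sS FS))[g' [g'S fg' _]]] := sS.
suff -> : g = g' by [].
have fg'x x : f (g' x) = x by exact: (congr1 (fun h => h x) fg').
have gfx x : g (f x) = x by exact: (congr1 (fun h => h x) gf).
by apply/funext => x; rewrite -{1}(fg'x x) gfx.
Qed.

Lemma finite_subgroup_enum (S : set (X -> X)) : fun_subgroup S -> finite_set S ->
  exists K : finmaps X, map_group (tagged K) /\ range (tagged K) = S.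
Proof.
move=> [Sid Scomp Sinv] /finite_seqP[s Se].
pose K : finmaps X := Tagged (fun m => 'I_m -> X -> X) (fun i : 'I_(size s) => nth id s i).
have KS f : S f <-> exists i, tagged K i = f.
  rewrite Se /=; split => [fs|[i <-]]; last exact: mem_nth.
  by exists (Ordinal (ltac:(by rewrite index_mem) : index f s < size s)); rewrite /= nth_index.
exists K; split; last by apply/seteqP; split => f; rewrite /= KS => -[i]; exists i.
split.
- by move=> i j; apply/KS/Scomp; apply/KS; [exists i|exists j].
- move=> i; have [g [/KS[j <-] e1 e2]] := Sinv _ (proj2 (KS _) (ex_intro _ i erefl)).
  by exists j; split => x; [exact: (congr1 (fun h => h x) e2)|exact: (congr1 (fun h => h x) e1)].
- exact/KS.
Qed.

#[global] Instance large_subgroups_filter : Filter large_subgroups.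
Proof.
split.
- by exists set0; split => //; exact: finite_set0.
- move=> P Q [F [Ffin FH FP]] [F' [F'fin F'H F'Q]]; exists (F `|` F'); split.
  + by rewrite finite_setU.
  + by move=> f [/FH|/F'H].
  + by move=> K KH sub; split; [apply: FP|apply: F'Q] => // f Ff; apply: sub; [left|right].
- by move=> P Q PQ [F [Ffin FH FP]]; exists F; split => // K KH sub; apply/PQ/FP.
Qed.

Lemma large_subgroups_proper : ProperFilter large_subgroups.
Proof.
apply: Build_ProperFilter_ex => Q [F [Ffin FH FQ]].
have gF := generated_subgroup FH.
have [K [Kgrp KF]] := finite_subgroup_enum gF (Hlf FH Ffin).
exists K; apply: FQ.
  split => // i; suff : generated F (tagged K i) by move/(_ H Hsub FH).
  by rewrite -KF; exists i.
by rewrite KF => f Ff S _ FS; exact: FS.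
Qed.

Lemma near_subgroup_in : \forall K \near large_subgroups, subgroup_in K.
Proof. by exists set0; split => //; exact: finite_set0. Qed.

End LargeSubgroups.

Section Saturation.
Variables (X : topologicalType) (m : nat) (kk : 'I_m -> X -> X).
Hypotheses (Kgrp : map_group kk) (Khomeo : forall i, homeo (kk i)).

Definition saturation (S : set X) := \bigcup_i kk i @` S.

Definition stab_invariant x (S : set X) := forall s y, kk s x = x -> S y -> S (kk s y).

Definition pattern (J : finType) (V : J -> set X) x :=
  [set y | forall i k, V k (kk i y) <-> V k (kk i x)].

Definition separating x (S : set X) :=
  forall y y' i j, S y -> S y' -> kk i y = kk j y' -> kk i x = kk j x.

Lemma saturation_clopen S : clopen S -> clopen (saturation S).
Proof.
move=> cS; apply: clopen_bigcup => [|i _]; first exact: finite_finset.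
exact: homeo_image_clopen.
Qed.

Lemma saturation_id S : S `<=` saturation S.
Proof. by move=> y Sy; exists (kone Kgrp) => //; exists y; rewrite ?koneE. Qed.

Lemma saturationK S i y : saturation S (kk i y) <-> saturation S y.
Proof.
have satK j z : saturation S z -> saturation S (kk j z).
  by move=> [l _ [w Sw <-]]; exists (kmul Kgrp j l) => //; exists w; rewrite ?kmulE.
by split => [/(satK (kinv Kgrp i))|/satK //]; rewrite kinvK.
Qed.

Lemma pattern_clopen (J : finType) (V : J -> set X) x :
  (forall k, clopen (V k)) -> clopen (pattern V x).
Proof.
move=> cV.
have -> : pattern V x = \bigcap_i [set y | forall k, (kk i @^-1` V k) y <-> V k (kk i x)].
  by apply/seteqP; split => [y Vy i _|y Vy i]; [exact: Vy|exact: Vy i I].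
apply: clopen_bigcap => i.
apply: (@clopen_pattern _ _ (fun k => kk i @^-1` V k) (fun k => V k (kk i x))) => k.
by apply: preimage_clopen; [exact: cV|case: (Khomeo i)].
Qed.

Lemma pattern_stab (J : finType) (V : J -> set X) x : stab_invariant x (pattern V x).
Proof. by move=> s y sx Wy i k; rewrite -kmulE Wy kmulE sx. Qed.

Lemma stab_invariantI x S S' :
  stab_invariant x S -> stab_invariant x S' -> stab_invariant x (S `&` S').
Proof. by move=> hS hS' s y sx [/(hS s _ sx) ? /(hS' s _ sx)]. Qed.

Lemma pattern_separating x (U : 'I_m * 'I_m -> set X) :
  (forall p, kk p.1 x <> kk p.2 x -> U p (kk p.1 x) /\ ~ U p (kk p.2 x)) ->
  separating x (pattern U x).
Proof.
move=> hU y y' i j Wy Wy' e; apply: contrapT => /(hU (i, j))[Ux nUx].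
by apply: nUx; apply/(Wy' j (i, j)); rewrite /= -e; apply/(Wy i (i, j)).
Qed.

End Saturation.

(** * Equidecomposing sets with comparable orbit counts *)

Definition swapn (a b n : nat) := if n == a then b else if n == b then a else n.

Lemma swapn_l a b : swapn a b a = b.
Proof. by rewrite /swapn eqxx. Qed.

Lemma swapnK a b : involutive (swapn a b).
Proof.
move=> n; rewrite /swapn; have [->|na] := eqVneq n a.
  by have [->|ba] := eqVneq b a; rewrite ?eqxx.
have [->|nb] := eqVneq n b; first by rewrite eqxx.
by rewrite (negbTE na) (negbTE nb).
Qed.

Lemma card_le_injection (T : finType) (S1 S2 : {set T}) : (#|S1| <= #|S2|)%N ->
  exists f : T -> T, [/\ {in S1 &, injective f}, (f @: S1 \subset S2)%SET &
    (#|S1| = #|S2| -> (f @: S1)%SET = S2)].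
Proof.
move=> le; pose f t := nth t (enum S2) (index t (enum S1)).
have ilt t : t \in S1 -> (index t (enum S1) < size (enum S2))%N.
  by move=> tS; rewrite -cardE; apply: leq_trans le; rewrite cardE index_mem mem_enum.
have finj : {in S1 &, injective f}.
  move=> t u tS uS e; have := nth_uniq t (ilt t tS) (ilt u uS) (enum_uniq S2).
  rewrite (set_nth_default u t (ilt u uS)) -/(f t) -/(f u) e eqxx => /esym/eqP ei.
  by rewrite -(nth_index t (_ : t \in enum S1)) ?mem_enum // ei nth_index ?mem_enum.
have sub : (f @: S1 \subset S2)%SET.
  by apply/fintype.subsetP => _ /imsetP[t tS ->]; rewrite -mem_enum mem_nth ?ilt.
exists f; split => // eS; apply/eqP; rewrite eqEcard sub /= card_in_imset //.
by rewrite eS.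
Qed.

Section Realization.
Variables (G : groupType) (X : topologicalType) (alpha : G -> X -> X).
Hypotheses (zd : zero_dim X) (T1 : forall x : X, closed [set x]) (Xc : compact [set: X]).
Variables (m : nat) (kk : 'I_m -> X -> X).
Hypotheses (Kgrp : map_group kk) (Kfull : forall i, full_group alpha (kk i)).
Variable N : nat.

Let Khomeo i : homeo (kk i) := (Kfull i).1.

Definition slice (Z : set (X * nat)) (n : 'I_N) := [set y | Z (y, val n)].

Definition tile (S : set X) (r : 'I_m * 'I_N) := (fun w => (kk r.1 w, val r.2)) @` S.

Lemma clopenY_tile S r : clopen S -> clopenY (tile S r).
Proof.
move=> cS k; have [<-|ne] := eqVneq (r.2 : nat) k.
  have -> : [set y | tile S r (y, r.2 : nat)] = kk r.1 @` S.
    by apply/seteqP; split => [y [w Sw [<-]]|_ [w Sw <-]]; exists w.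
  exact: homeo_image_clopen.
have -> : [set y | tile S r (y, k)] = set0.
  by apply/seteqP; split => // y [w _ [_ e]]; move: ne; rewrite e eqxx.
exact: (@clopen0 X).
Qed.

Lemma tile_move S r r' :
  tile S r' = moveY (kk (kmul Kgrp r'.1 (kinv Kgrp r.1))) (swapn r.2 r'.2) @` tile S r.
Proof.
rewrite /tile image_comp; apply: eq_imagel => w _.
by rewrite /moveY /= kmulE kinvK swapn_l.
Qed.

Lemma equidec_tile S r r' : clopen S -> equidec alpha (tile S r) (tile S r').
Proof.
move=> cS; rewrite (tile_move S r r'); apply: equidec_move => //.
- exact: clopenY_tile.
- by exists (swapn r.2 r'.2); exact: swapnK.
Qed.

Lemma tile_disjoint x S : separating kk x S -> trivIset [set r | orbit_rep kk x r.1] (tile S).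
Proof.
move=> sepS [i n] [j l] /= ri rj [_ [[w Sw <-] [w' Sw' /esym[e1 /val_inj e2]]]].
by rewrite (orbit_rep_uniq ri rj (sepS _ _ _ _ Sw Sw' e1)) e2.
Qed.

Lemma restrict_tiles x S Z : bounded_by N Z -> stab_invariant kk x S ->
  S `<=` pattern kk (slice Z) x ->
  Z `&` fst @^-1` saturation kk S = \bigcup_(r in [set` orbit_points kk N Z x]) tile S r.
Proof.
move=> bZ stabS SZ; apply/seteqP; split => [[z n] [Zzn [l _ [w Sw /= ez]]]|].
  have ltn := bZ _ Zzn; pose r1 := rep_of kk x l.
  pose s := kmul Kgrp (kinv Kgrp r1) l.
  have sx : kk s x = x by rewrite kmulE -(rep_ofE kk x l) kinvK.
  exists (r1, Ordinal ltn).
    apply/orbit_pointsP; split; last exact: rep_of_rep.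
    by rewrite /= rep_ofE; apply/(SZ _ Sw l (Ordinal ltn)); rewrite /slice /= ez.
  by exists (kk s w); [exact: stabS|rewrite /= kmulE kinvKV ez].
move=> _ [r /orbit_pointsP[Zr _] [w Sw <-]]; split; last by exists r.1 => //; exists w.
exact/(SZ _ Sw r.1 r.2).
Qed.

Variables (A B : set (X * nat)).
Hypotheses (cA : clopenY A) (cB : clopenY B) (bA : bounded_by N A) (bB : bounded_by N B).

(* Over the saturation of an adapted S, A and B split into disjoint translates of S
   indexed by their points over the orbit of x; see [restrict_tiles], [tile_disjoint]. *)
Definition adapted x S := [/\ clopen S, stab_invariant kk x S,
  S `<=` pattern kk (slice A) x, S `<=` pattern kk (slice B) x & separating kk x S].

Lemma adapted_nbhd x : exists2 W, W x & adapted x W.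
Proof.
have /choice[U hU] : forall p : 'I_m * 'I_m, exists U : set X,
    clopen U /\ (kk p.1 x <> kk p.2 x -> U (kk p.1 x) /\ ~ U (kk p.2 x)).
  move=> p; have [e|ne] := pselect (kk p.1 x = kk p.2 x).
    by exists set0; split => //; exact: clopen0.
  by have [U [cU U1 U2]] := clopen_separation zd T1 ne; exists U.
have sepU := pattern_separating (fun p => (hU p).2).
exists (pattern kk (slice A) x `&` pattern kk (slice B) x `&` pattern kk U x) => //; split.
- by apply: clopenI; [apply: clopenI|]; apply: pattern_clopen => // k;
    [exact: cA|exact: cB|exact: (hU k).1].
- by apply: stab_invariantI; [apply: stab_invariantI|]; exact: pattern_stab.
- by move=> y [[]].
- by move=> y [[]].
- by move=> y y' i j [_ Uy] [_ Uy']; exact: sepU.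
Qed.

Lemma adaptedI x S E : adapted x S -> clopen E -> (forall i y, E y -> E (kk i y)) ->
  adapted x (S `&` E).
Proof.
move=> [cS stabS SA SB sepS] cE EK; split.
- exact: clopenI.
- by apply: stab_invariantI => // s y _; exact: EK.
- by move=> y [/SA].
- by move=> y [/SB].
- by move=> y y' i j [Sy _] [Sy' _]; exact: sepS.
Qed.

(* An injection from the orbit points of A into those of B moves tiles onto tiles. *)
Lemma equidec_sub_restrict x S : adapted x S ->
  (orbit_countN kk N A x <= orbit_countN kk N B x)%N ->
  exists2 B', B' `<=` B `&` fst @^-1` saturation kk S &
    [/\ clopenY B', equidec alpha (A `&` fst @^-1` saturation kk S) B' &
        (orbit_countN kk N A x = orbit_countN kk N B x -> B' = B `&` fst @^-1` saturation kk S)].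
Proof.
move=> [cS stabS SA SB sepS] le; rewrite (restrict_tiles bA stabS SA) (restrict_tiles bB stabS SB).
have [f [f_inj fAB fAB_eq]] := card_le_injection le.
have repA r : r \in orbit_points kk N A x -> orbit_rep kk x r.1 by case/orbit_pointsP.
have repB r : r \in orbit_points kk N B x -> orbit_rep kk x r.1 by case/orbit_pointsP.
have fB r : r \in orbit_points kk N A x -> f r \in orbit_points kk N B x.
  by move=> rA; apply: (fintype.subsetP fAB); apply: imset_f.
have imf : [set` (f @: orbit_points kk N A x)%SET] = f @` [set` orbit_points kk N A x].
  by apply/seteqP; split => [_ /imsetP[r rA ->]|_ [r rA <-]]; [exists r|exact: imset_f].
exists (\bigcup_(r in [set` (f @: orbit_points kk N A x)%SET]) tile S r); last split.
- by move=> p [r /(fintype.subsetP fAB) rB Sp]; exists r.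
- by apply: clopenY_bigcup => [|r _]; [exact: finite_finset|exact: clopenY_tile].
- rewrite imf bigcup_image; apply: equidec_bigcup => [|r _||]; first exact: finite_finset.
  + exact: equidec_tile.
  + by apply: sub_trivIset (tile_disjoint sepS) => r /repA.
  + move=> r r' rA r'A [p [Pr Pr']]; apply: f_inj => //.
    by apply: (tile_disjoint sepS); [exact/repB/fB|exact/repB/fB|exists p].
- by move=> /fAB_eq ->.
Qed.

Section FreshParts.
Variables (L : nat) (W : 'I_L -> set X).

Definition fresh_part j := W j `\` \bigcup_(l in [set l : 'I_L | (l < j)%N]) saturation kk (W l).

Lemma fresh_part_adapted (p : 'I_L -> X) j : (forall j, adapted (p j) (W j)) ->
  adapted (p j) (fresh_part j).
Proof.
move=> hW; have [cW _ _ _ _] := hW j; apply: adaptedI => [//||i y].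
- apply: (@clopenC _ _ set0); apply: clopen_bigcup => [|l _]; first exact: finite_finset.
  by apply: (saturation_clopen Khomeo); case: (hW l).
- by move=> nWy [l lj /(saturationK Kgrp) Wl]; apply: nWy; exists l.
Qed.

Lemma trivIset_saturation_fresh : trivIset setT (fun j => saturation kk (fresh_part j)).
Proof.
have key (i j : 'I_L) z : (i < j)%N -> saturation kk (fresh_part i) z ->
    ~ saturation kk (fresh_part j) z.
  move=> ij [l _ [w [Wi _] <-]] [l' _ [w' [_ nW'] e]]; apply: nW'; exists i => //.
  apply/(saturationK Kgrp _ l'); rewrite e; apply/(saturationK Kgrp).
  exact: (saturation_id Kgrp).
move=> i j _ _ [z [Si Sj]]; apply: val_inj; case: (ltngtP i j) => // ij.
- by case: (key _ _ _ ij Si).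
- by case: (key _ _ _ ij Sj).
Qed.

Lemma cover_saturation_fresh : (forall y, exists j, W j y) ->
  forall y, exists j, saturation kk (fresh_part j) y.
Proof.
move=> cov y; have [j0 Wy] := cov y.
have sat0 : `[< saturation kk (W j0) y >] by apply/asboolP; exact: (saturation_id Kgrp).
case: (arg_minnP (P := fun j => `[< saturation kk (W j) y >]) val sat0).
move=> j /asboolP[i _ [w Wjw wy]] jmin.
exists j, i => //; exists w => //; split => // -[l lj Wlw].
have /jmin : `[< saturation kk (W l) y >] by apply/asboolP; rewrite -wy; exact/(saturationK Kgrp).
by rewrite leqNgt lj.
Qed.

Lemma trivIset_over_fresh (F : 'I_L -> set (X * nat)) :
  (forall j, F j `<=` fst @^-1` saturation kk (fresh_part j)) -> trivIset setT F.
Proof.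
move=> FS i j _ _ [q [/FS Si /FS Sj]].
by apply: trivIset_saturation_fresh => //; exists q.1.
Qed.

Lemma bigcup_over_fresh (Z : set (X * nat)) : (forall y, exists j, W j y) ->
  Z = \bigcup_j (Z `&` fst @^-1` saturation kk (fresh_part j)).
Proof.
move=> cov; apply/seteqP; split => [[y n] Zy|q [j _ []//]].
by have [j Sy] := cover_saturation_fresh cov y; exists j.
Qed.

End FreshParts.

(* The local equidecompositions are glued along the disjoint K-invariant clopen sets
   [saturation (fresh_part j)], finitely many of which cover X by compactness. *)
Lemma equidec_sub_of_orbit_countN_le :
  (forall y, orbit_countN kk N A y <= orbit_countN kk N B y)%N ->
  exists2 B', B' `<=` B &
    [/\ clopenY B', equidec alpha A B' &
        ((forall y, orbit_countN kk N A y = orbit_countN kk N B y) -> B' = B)].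
Proof.
move=> le; have /choice[W hW] : forall x, exists W, W x /\ adapted x W.
  by move=> x; have [W Wx aW] := adapted_nbhd x; exists W.
have oW x : open (W x) by case: (hW x) => _ [[]].
have [L [p cov]] := compact_finite_subcover Xc oW (fun x => (hW x).1).
pose S := fresh_part (W \o p).
have aS j : adapted (p j) (S j) by apply: fresh_part_adapted => i; exact: (hW _).2.
have /choice[Bf hB] : forall j, exists B', B' `<=` B `&` fst @^-1` saturation kk (S j) /\
    [/\ clopenY B', equidec alpha (A `&` fst @^-1` saturation kk (S j)) B' &
        (orbit_countN kk N A (p j) = orbit_countN kk N B (p j) ->
         B' = B `&` fst @^-1` saturation kk (S j))].
  by move=> j; have [B' ? ?] := equidec_sub_restrict (aS j) (le (p j)); exists B'.
exists (\bigcup_j Bf j); first by move=> q [j _ /(hB j).1[]].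
split.
- by apply: clopenY_bigcup => [|j _]; [exact: finite_finset|case: (hB j).2].
- rewrite [X in equidec _ X _](bigcup_over_fresh A cov).
  apply: equidec_bigcup => [|j _||]; first exact: finite_finset.
  + by case: (hB j).2.
  + by apply: (trivIset_over_fresh (W := W \o p)) => j q [].
  + by apply: (trivIset_over_fresh (W := W \o p)) => j q /(hB j).1[].
- move=> eqc; rewrite [RHS](bigcup_over_fresh B cov); apply: eq_bigcupr => j _.
  by case: (hB j).2 => _ _ ->.
Qed.

End Realization.

Section Main.
Variables (G : groupType) (X : topologicalType) (alpha : G -> X -> X) (H : set (X -> X)).
Hypotheses (act : is_action alpha) (Hfull : H `<=` full_group alpha) (Hsub : fun_subgroup H)
  (Hlf : locally_finite H) (Hdense : dense_in_full alpha H).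

Local Notation cnt K := (orbit_count (tagged K)).

Lemma dense_move (P : set (X * nat)) g s : clopenY P -> (exists N, bounded_by N P) ->
  exists2 h, H h & moveY h s @` P = actY alpha g s @` P.
Proof.
move=> cP [N bP]; have [n [Q [pQ QP]]] := level_atoms cP bP.
have [h [Hh hQ]] := Hdense (action_full act g) pQ.
by exists h => //; apply: move_image_atoms QP hQ; case: pQ.
Qed.

(* By density each piece is moved by an element of H; once K contains these
   elements, the moves preserve the K-orbit counts. *)
Lemma near_equidec_orbit_count (A B : set (X * nat)) :
  bclopen A -> bclopen B -> equidec alpha A B ->
  \forall K \near large_subgroups H, forall y, cnt K A y = cnt K B y.
Proof.
move=> [_ /boundedY_bounded[NA bA]] [_ /boundedY_bounded[NB bB]].
move=> [k [P [gam [sig [Pcl tP eA tI eB]]]]].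
have bAN := bounded_by_le (leq_maxl NA NB) bA; have bBN := bounded_by_le (leq_maxr NA NB) bB.
have bP i : bounded_by (maxn NA NB) (P i) by move=> p Pp; apply: bAN; rewrite eA; exists i.
have bQ i : bounded_by (maxn NA NB) (actY alpha (gam i) (sig i) @` P i).
  by move=> p Qp; apply: bBN; rewrite eB; exists i.
have /choice[h hP] : forall i,
    exists h, H h /\ moveY h (sig i) @` P i = actY alpha (gam i) (sig i) @` P i.
  move=> i; have [|h ? ?] := dense_move (gam i) (sig i) (Pcl i).2; last by exists h.
  by exists (maxn NA NB).
exists (range h); split.
- exact: finite_image finite_finset.
- by move=> _ [i _ <-]; case: (hP i).
move=> K [Kgrp _] hK y; rewrite (orbit_countE _ y bAN) (orbit_countE _ y bBN) eA eB.
rewrite !orbit_countN_bigcup //; apply: eq_bigr => i _; have [j _ ej] := hK (h i) (imageT h i).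
have := bQ i; rewrite -(hP i).2 -ej => bQi.
by rewrite orbit_countN_move //; case: (Pcl i).
Qed.

Lemma near_orbit_count_sum_rep A C S :
  bclopen A -> bclopen C -> bclopen S -> sum_rep alpha A C S ->
  \forall K \near large_subgroups H, forall y, cnt K S y = (cnt K A y + cnt K C y)%N.
Proof.
move=> bcA bcC bcS [A' [C' [[bcA' bcC'] AC' eA eC eS]]]; near=> K.
have eA' : forall y, cnt K A y = cnt K A' y by near: K; exact: near_equidec_orbit_count.
have eC' : forall y, cnt K C y = cnt K C' y by near: K; exact: near_equidec_orbit_count.
have eS' : forall y, cnt K S y = cnt K (A' `|` C') y.
  by near: K; apply: near_equidec_orbit_count => //; exact: bclopen_setU.
move=> y; rewrite eS' eA' eC' orbit_count_setU //.
  by apply: boundedY_bounded; exact: bcA'.2.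
by apply: boundedY_bounded; exact: bcC'.2.
Unshelve. all: by end_near.
Qed.

Lemma near_orbit_count_nmul n A M : bclopen A -> bclopen M -> nmul alpha n A M ->
  \forall K \near large_subgroups H, forall y, cnt K M y = (n * cnt K A y)%N.
Proof.
move=> bcA bcM [P [hP tP eM]]; have bcP := bclopen_bigcup (fun i => (hP i).1); near=> K.
have eM' : forall y, cnt K M y = cnt K (\bigcup_i P i) y.
  by near: K; exact: near_equidec_orbit_count.
have eP : forall i y, cnt K (P i) y = cnt K A y.
  by near: K; apply: filter_forall => i; exact: near_equidec_orbit_count (hP i).1 bcA (hP i).2.
move=> y; rewrite eM' orbit_count_bigcup //.
  by rewrite (eq_bigr _ (fun i _ => eP i y)) sum_nat_const card_ord.
by move=> i; apply: boundedY_bounded; case: (hP i).1.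
Unshelve. all: by end_near.
Qed.

Hypotheses (zd : zero_dim X) (T1 : forall x : X, closed [set x]) (Xc : compact [set: X]).

Lemma equidec_sub_of_orbit_count_le K A B : subgroup_in H K -> bclopen A -> bclopen B ->
  (forall y, cnt K A y <= cnt K B y)%N ->
  exists2 B', B' `<=` B &
    [/\ clopenY B', equidec alpha A B' & ((forall y, cnt K A y = cnt K B y) -> B' = B)].
Proof.
move=> [Kgrp KH] [cA /boundedY_bounded[NA bA]] [cB /boundedY_bounded[NB bB]] le.
have bAN := bounded_by_le (leq_maxl NA NB) bA; have bBN := bounded_by_le (leq_maxr NA NB) bB.
have [B' B'B [cB' eAB' eqB']] :=
  equidec_sub_of_orbit_countN_le zd T1 Xc Kgrp (fun i => Hfull (KH i)) cA cB bAN bBN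
    (fun y => ltac:(by rewrite -(orbit_countE _ y bAN) -(orbit_countE _ y bBN))).
exists B' => //; split => // eqc; apply: eqB' => y.
by rewrite -(orbit_countE _ y bAN) -(orbit_countE _ y bBN).
Qed.

Lemma orbit_count_le_leT K A B : subgroup_in H K -> bclopen A -> bclopen B ->
  (forall y, cnt K A y <= cnt K B y)%N -> leT alpha A B.
Proof.
move=> HK bcA bcB le; have [B' B'B [cB' eAB' _]] := equidec_sub_of_orbit_count_le HK bcA bcB le.
have [cB [NB hB]] := bcB.
have bcsub Z : clopenY Z -> Z `<=` B -> bclopen Z.
  by move=> cZ ZB; split => //; exists NB => x n /(hB x) nB /ZB.
have cBB' : clopenY (B `\` B').
  by move=> n; apply: clopenI; [exact: cB|apply: (@clopenC _ _ set0); exact: cB'].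
exists (B `\` B'); split; first exact: bcsub.
exists B', (B `\` B'); split; first by split; apply: bcsub.
- exact: setDIK.
- exact: eAB'.
- exact: equidec_refl.
- by rewrite setDUK //; exact: equidec_refl.
Qed.

Lemma orbit_count_eq_equidec K A B : subgroup_in H K -> bclopen A -> bclopen B ->
  (forall y, cnt K A y = cnt K B y) -> equidec alpha A B.
Proof.
move=> HK bcA bcB eqc; have le y : (cnt K A y <= cnt K B y)%N by rewrite eqc.
by have [B' _ [_ eAB' /(_ eqc) <-]] := equidec_sub_of_orbit_count_le HK bcA bcB le.
Qed.

Lemma unperforated_of_dense : unperforated alpha.
Proof.
move=> n A B M N n_gt0 bcA bcB bcM bcN nA nB [C [bcC MCN]].
have : \forall K \near large_subgroups H, [/\ subgroup_in H K,
    forall y, cnt K M y = (n * cnt K A y)%N, forall y, cnt K N y = (n * cnt K B y)%N &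
    forall y, cnt K N y = (cnt K M y + cnt K C y)%N].
  by near=> K; split; near: K; [exact: near_subgroup_in|exact: near_orbit_count_nmul|
    exact: near_orbit_count_nmul|exact: near_orbit_count_sum_rep].
move=> /(filter_ex (FF := large_subgroups_proper Hsub Hlf))[K [HK eM eN eMN]].
apply: (orbit_count_le_leT HK bcA bcB) => y.
by rewrite -(leq_pmul2l n_gt0) -eM -eN eMN leq_addr.
Unshelve. all: by end_near.
Qed.

Lemma cancellative_of_dense : cancellative alpha.
Proof.
move=> A B C S bcA bcB bcC bcS sB sC.
have : \forall K \near large_subgroups H, [/\ subgroup_in H K,
    forall y, cnt K S y = (cnt K A y + cnt K B y)%N &
    forall y, cnt K S y = (cnt K A y + cnt K C y)%N].
  by near=> K; split; near: K;
    [exact: near_subgroup_in|exact: near_orbit_count_sum_rep|exact: near_orbit_count_sum_rep].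
move=> /(filter_ex (FF := large_subgroups_proper Hsub Hlf))[K [HK eB eC]].
apply: (orbit_count_eq_equidec HK bcB bcC) => y.
by apply/eqP; rewrite -(eqn_add2l (cnt K A y)) -eB -eC.
Unshelve. all: by end_near.
Qed.

End Main.

Theorem lemmal (G : groupType) (X : topologicalType) (alpha : G -> X -> X) :
  countable [set: G] ->
  is_action alpha ->
  compact [set: X] -> zero_dim X -> metrizable X ->
  (exists H : set (X -> X),
      [/\ H `<=` full_group alpha, fun_subgroup H,
          locally_finite H & dense_in_full alpha H]) ->
  unperforated alpha /\ cancellative alpha.
Proof.
move=> _ act Xc zd /metrizable_closed1 T1 [H [Hfull Hsub Hlf Hdense]].
split; [exact: (unperforated_of_dense act Hfull Hsub Hlf Hdense zd T1 Xc)|].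
exact: (cancellative_of_dense act Hfull Hsub Hlf Hdense zd T1 Xc).
Qed.
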